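(* Let $\Sigma$ be a finite alphabet and $\emptyset \subsetneq L \subsetneq \Sigma^*$. Then for all $n\ge 0$, $V_L(n) = \log |\psi_L(\Sigma^{\le n})|$.
   Context: $\log x$ denotes $\lfloor\log_2 x\rfloor$; $\Sigma^{\le n}$ is the set of words of length at most $n$. The Myhill–Nerode congruence: $x\sim_L y$ iff for all $z$, $xz\in L\iff yz\in L$. Define $\psi_L(a_1\cdots a_n)=[a_1\cdots a_n]_{\sim_L}[a_2\cdots a_n]_{\sim_L}\cdots[a_n]_{\sim_L}$, a word over the set of $\sim_L$-classes (with $\psi_L(\varepsilon)=\varepsilon$). Variable-size sliding window model: a streaming algorithm over an alphabet is a deterministic (possibly infinite-state) automaton with an injective encoding $\mathrm{enc}$ of states into bit strings, and $\mathrm{space}(\mathcal{A},w)=\max\{|\mathrm{enc}(\mathcal{A}(u))|:u\text{ prefix of }w\}$. Let $\overline\Sigma=\Sigma\cup\{\downarrow\}$ and $\mathrm{wnd}(\varepsilon)=\varepsilon$, $\mathrm{wnd}(ub)=\mathrm{wnd}(u)b$ for $b\in\Sigma$, $\mathrm{wnd}(u\!\downarrow)=\varepsilon$ if $\mathrm{wnd}(u)=\varepsilon$, $\mathrm{wnd}(u\!\downarrow)=v$ if $\mathrm{wnd}(u)=bv$. A variable-size sliding window algorithm for $L$ is a streaming algorithm over $\overline\Sigma$ accepting $\{w:\mathrm{wnd}(w)\in L\}$ with space complexity $v_\mathcal{A}(n)=\max\{\mathrm{space}(\mathcal{A},u):|\mathrm{wnd}(v)|\le n\text{ for all prefixes }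 v \text{ of } u\}$. $V_L(n)$ is the minimum of $v_\mathcal{A}(n)$ over all variable-size sliding window algorithms for $L$. *)

From mathcomp Require Import all_boot.
Set Implicit Arguments. Unset Strict Implicit. Unset Printing Implicit Defensive.

Section Defs.
Variable Sigma : finType.

Definition language := seq Sigma -> Prop.

Definition nerode (L : language) (x y : seq Sigma) : Prop :=
  forall z, L (x ++ z) <-> L (y ++ z).

Definition nclass (L : language) (x : seq Sigma) : seq Sigma -> Prop :=
  fun y => nerode L x y.

Definition psi (L : language) (w : seq Sigma) : seq (seq Sigma -> Prop) :=
  [seq nclass L (drop i w) | i <- iota 0 (size w)].

Definition psi_image (L : language) (n : nat) : seq (seq Sigma -> Prop) -> Prop :=
  fun p => exists w : seq Sigma, size w <= n /\ psi L w = p.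

(* Extended alphabet: Some b = letter b, None = the expiration symbol "down". *)
Definition sym := option Sigma.

Definition wnd_step (v : seq Sigma) (a : sym) : seq Sigma :=
  match a with Some b => rcons v b | None => behead v end.
Definition wnd (w : seq sym) : seq Sigma := foldl wnd_step [::] w.

Record stream_alg := StreamAlg {
  st : Type;
  st_init : st;
  st_delta : st -> sym -> st;
  st_final : st -> Prop;
  st_enc : st -> seq bool;
  st_enc_inj : injective st_enc
}.

Definition run (A : stream_alg) (u : seq sym) : st A :=
  foldl (@st_delta A) (st_init A) u.

Definition space (A : stream_alg) (w : seq sym) : nat :=
  \max_(i < (size w).+1) size (st_enc (run A (take i w))).

Definition sw_alg_for (L : language) (A : stream_alg) : Prop :=
  forall w : seq sym, st_final (run A w) <-> L (wnd w).

(* v_A(n) <= m  (v_A(n) is a max over an infinite set, possibly infinite). *)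
Definition v_le (A : stream_alg) (n m : nat) : Prop :=
  forall u : seq sym,
    (forall i, i <= size u -> size (wnd (take i u)) <= n) -> space A u <= m.

Definition V_eq (L : language) (n m : nat) : Prop :=
  (exists A, sw_alg_for L A /\ v_le A n m) /\
  (forall A m', sw_alg_for L A -> v_le A n m' -> m <= m').

End Defs.

Definition has_card (T : Type) (S : T -> Prop) (N : nat) : Prop :=
  exists f : 'I_N -> T, injective f /\ (forall x, S x <-> exists i, f i = x).

Definition log2 (x : nat) : nat := trunc_log 2 x.

(* A sliding window algorithm that has read the window w must still answer
   correctly after any further letters y are inserted and any number j of them
   expire, i.e. it must know L (drop j (w ++ y)) for all y, j.  Because L is
   neither empty nor full, these tests recover both the length of w and the
   Nerode class of each suffix of w, that is, psi_L w.  Hence the windows of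
   length at most n need N = |psi_L(Sigma^{<=n})| pairwise distinct states,
   and N distinct bit strings cannot all be shorter than log N.  Conversely
   psi_L of the window is a valid state: it can be updated letter by letter
   and determines membership, and numbering the N classes of short windows
   first gives each of them a code of length at most log N. *)

From mathcomp Require Import all_boot zify.
From Stdlib Require Import ClassicalEpsilon FunctionalExtensionality.
From Stdlib Require Import PropExtensionality ProofIrrelevance.
Set Implicit Arguments. Unset Strict Implicit. Unset Printing Implicit Defensive.

Section Nerode.
Variables (S : finType) (L : language S).

Lemma nerode_rcons x y a : nerode L x y -> nerode L (rcons x a) (rcons y a).
Proof. by move=> Exy z; rewrite -!cats1 -!catA. Qed.

Lemma eq_nclass x y : nerode L x y -> nclass L x = nclass L y.
Proof.
move=> Exy; apply: functional_extensionality => v.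
apply: propositional_extensionality; split=> E z.
- exact: iff_trans (iff_sym (Exy z)) (E z).
- exact: iff_trans (Exy z) (E z).
Qed.

Lemma size_psi w : size (psi L w) = size w.
Proof. by rewrite size_map size_iota. Qed.

Lemma nth_psi d w i : i < size w -> nth d (psi L w) i = nclass L (drop i w).
Proof. by move=> lt_iw; rewrite (nth_map 0) ?size_iota // nth_iota. Qed.

Lemma psi_eqP x y :
  psi L x = psi L y <-> size x = size y /\ forall i, nerode L (drop i x) (drop i y).
Proof.
split=> [Exy | [Esz Exy]]; last by rewrite /psi Esz; apply: eq_map => i; apply: eq_nclass.
have Esz : size x = size y by rewrite -size_psi Exy size_psi.
split=> // i; have [lt_ix | le_xi] := ltnP i (size x).
- have E : nclass L (drop i x) = nclass L (drop i y).
    by rewrite -(nth_psi (nclass L [::]) lt_ix) Exy nth_psi -?Esz.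
  by change (nclass L (drop i x) (drop i y)); rewrite E.
- by rewrite drop_oversize // drop_oversize -?Esz.
Qed.

Lemma psi_wnd_step x y a :
  psi L x = psi L y -> psi L (wnd_step x a) = psi L (wnd_step y a).
Proof.
move/psi_eqP=> [Esz Exy]; apply/psi_eqP; case: a => [b|] /=.
- rewrite !size_rcons Esz; split=> // i; have [le_ix | lt_xi] := leqP i (size x).
  + by rewrite !drop_rcons -?Esz //; apply: nerode_rcons.
  + by rewrite drop_oversize ?size_rcons // drop_oversize ?size_rcons -?Esz.
- by rewrite -!drop1 !size_drop Esz; split=> // i; rewrite !drop_drop.
Qed.

Lemma psi_mem x y : psi L x = psi L y -> L x <-> L y.
Proof. by move/psi_eqP=> [_ /(_ 0 [::])]; rewrite !drop0 !cats0. Qed.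

End Nerode.

Section Windows.
Variable S : finType.

Lemma foldl_wnd_step_Some (v w : seq S) : foldl (@wnd_step S) v (map Some w) = v ++ w.
Proof. by elim: w v => [|a w IHw] v /=; rewrite ?cats0 // IHw cat_rcons. Qed.

Lemma foldl_wnd_step_None (v : seq S) j : foldl (@wnd_step S) v (nseq j None) = drop j v.
Proof. by elim: j v => [|j IHj] [|a v] //=; rewrite ?drop0 // IHj. Qed.

Lemma wnd_Some (w : seq S) : wnd (map Some w) = w.
Proof. exact: foldl_wnd_step_Some. Qed.

Lemma wnd_Some_None (w : seq S) j : wnd (map Some w ++ nseq j None) = drop j w.
Proof. by rewrite /wnd foldl_cat foldl_wnd_step_Some foldl_wnd_step_None. Qed.

Lemma run_cat (A : stream_alg S) u v :
  run A (u ++ v) = foldl (@st_delta S A) (run A u) v.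
Proof. exact: foldl_cat. Qed.

End Windows.

Definition sw_equiv (S : finType) (L : language S) (w w' : seq S) : Prop :=
  forall y j, L (drop j (w ++ y)) <-> L (drop j (w' ++ y)).

Lemma sw_alg_run_equiv (S : finType) (L : language S) (A : stream_alg S) w w' :
  sw_alg_for L A -> run A (map Some w) = run A (map Some w') -> sw_equiv L w w'.
Proof.
move=> AL Eww' y j.
have := AL (map Some (w ++ y) ++ nseq j None).
have := AL (map Some (w' ++ y) ++ nseq j None).
rewrite !wnd_Some_None !map_cat -!catA !run_cat Eww' => -> Ew.
exact: iff_sym.
Qed.

Lemma drop_invariant_const (S : finType) (L : language S) d :
  0 < d -> (forall y, L y <-> L (drop d y)) -> forall y, L y <-> L [::].
Proof.
move=> d_gt0 Ld.
have LdK k y : L y <-> L (drop (k * d) y).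
  elim: k y => [|k IHk] y; first by rewrite drop0.
  by rewrite mulSn -drop_drop; apply: iff_trans (IHk y) (Ld _).
by move=> y; have := LdK (size y) y; rewrite drop_oversize // leq_pmulr.
Qed.

Section NontrivialLanguage.
Variables (S : finType) (L : language S).
Hypotheses (L_nonempty : exists w, L w) (L_proper : exists w, ~ L w).

Lemma sw_equiv_size_leq w w' : sw_equiv L w w' -> size w' <= size w.
Proof.
move=> Eww'; rewrite leqNgt; apply/negP => lt_ww'.
have Ld y : L y <-> L (drop (size w' - size w) y).
  have := Eww' y (size w').
  rewrite (drop_size_cat y (erefl (size w'))) drop_cat ltnNge (ltnW lt_ww').
  exact: iff_sym.
have d_gt0 : 0 < size w' - size w by rewrite subn_gt0.
have Lnil := drop_invariant_const d_gt0 Ld.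
case: L_nonempty L_proper => [x Lx] [z nLz].
by apply/nLz/(Lnil z)/(Lnil x).
Qed.

Lemma sw_equiv_psi w w' : sw_equiv L w w' -> psi L w = psi L w'.
Proof.
move=> Eww'; have Esz : size w = size w'.
  apply/eqP; rewrite eqn_leq; apply/andP; split; last exact: sw_equiv_size_leq.
  by apply: sw_equiv_size_leq => y j; apply: iff_sym.
apply/psi_eqP; split=> // i z; have [lt_iw | le_wi] := ltnP i (size w).
- by have := Eww' z i; rewrite !drop_cat -Esz lt_iw.
- by rewrite drop_oversize // drop_oversize -?Esz.
Qed.

End NontrivialLanguage.

(* [code s] reads [1 :: s] as a binary numeral: a bijection between bit
   strings and positive integers. *)
Definition code (s : seq bool) : nat := foldl (fun acc (b : bool) => acc.*2 + b) 1 s.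

Lemma code_rcons s b : code (rcons s b) = (code s).*2 + b.
Proof. by rewrite /code foldl_rcons. Qed.

Lemma code_bounds s : 2 ^ size s <= code s < 2 ^ (size s).+1.
Proof.
elim/last_ind: s => [|s b /andP[lb]] //; rewrite expnS => ub.
by rewrite code_rcons size_rcons !expnS -!addnn; case: b => /=; lia.
Qed.

Lemma code_gt0 s : 0 < code s.
Proof. by have /andP[lb _] := code_bounds s; apply: leq_trans lb; rewrite expn_gt0. Qed.

Lemma log2_code s : log2 (code s) = size s.
Proof. exact: trunc_log_eq (code_bounds s). Qed.

Lemma code_inj : injective code.
Proof.
elim/last_ind => [|s b IHs] t Est; have := congr1 log2 Est; rewrite !log2_code.
- by case/lastP: t Est => [|t c] // _; rewrite size_rcons.
- case/lastP: t Est => [|t c]; first by rewrite size_rcons.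
  rewrite !code_rcons => Est _.
  have Ebc : b = c by have := congr1 odd Est; rewrite !oddD !odd_double /= !oddb.
  by rewrite Ebc (IHs t) //; move: Est; rewrite Ebc -!addnn; lia.
Qed.

Lemma code_surj k : exists s, code s == k.+1.
Proof.
elim/ltn_ind: k => -[|k] IHk; first by exists [::].
have [|s /eqP Es] := IHk k./2; first by rewrite ltnS -[leqRHS]odd_double_half -addnn; lia.
by exists (rcons s (odd k)); rewrite code_rcons Es doubleS !addSn addnC odd_double_half.
Qed.

Definition bin (k : nat) : seq bool := xchoose (code_surj k).

Lemma bin_code k : code (bin k) = k.+1.
Proof. exact/eqP/(xchooseP (code_surj k)). Qed.

Lemma bin_inj : injective bin.
Proof. by move=> i j /(congr1 code); rewrite !bin_code => -[]. Qed.

Lemma size_bin k : size (bin k) = log2 k.+1.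
Proof. by rewrite -bin_code log2_code. Qed.

Lemma log2_leq N m : N < 2 ^ m.+1 -> log2 N <= m.
Proof.
case: N => [|N] lt_Nm; first by rewrite /log2 trunc_log0.
by rewrite -ltnS -(ltn_exp2l _ _ (isT : 1 < 2)) (leq_ltn_trans (trunc_logP _ _)).
Qed.

Lemma log2_card_le N (g : 'I_N -> seq bool) m :
  injective g -> (forall i, size (g i) <= m) -> log2 N <= m.
Proof.
move=> g_inj g_size; apply: log2_leq.
have lt_code i : (code (g i)).-1 < (2 ^ m.+1).-1.
  have /andP[_ ub] := code_bounds (g i).
  have : 2 ^ (size (g i)).+1 <= 2 ^ m.+1 by rewrite leq_exp2l // ltnS g_size.
  by have := code_gt0 (g i); lia.
have code_ord_inj : injective (fun i => Ordinal (lt_code i)).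
  move=> i j /(congr1 val) /= Eij; apply/g_inj/code_inj.
  by have := code_gt0 (g i); have := code_gt0 (g j); lia.
by have := leq_card _ code_ord_inj; rewrite !card_ord expnS; lia.
Qed.

Lemma has_card_ext (T : Type) (P Q : T -> Prop) N :
  (forall x, P x <-> Q x) -> has_card P N -> has_card Q N.
Proof.
move=> EPQ [f [f_inj f_onto]]; exists f; split=> // x.
exact: iff_trans (iff_sym (EPQ x)) (f_onto x).
Qed.

Lemma has_card0 (T : Type) (P : T -> Prop) : (forall x, ~ P x) -> has_card P 0.
Proof.
move=> nP; exists (fun i : 'I_0 => False_rect T (notF (ltn_ord i))).
by split=> [[] | x] //; split=> [/nP | [[]]].
Qed.

Lemma has_card_add (T : Type) (P : T -> Prop) N x :
  has_card P N -> ~ P x -> has_card (fun y => P y \/ y = x) N.+1.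
Proof.
move=> [f [f_inj f_onto]] nPx.
pose g i := if unlift ord_max i is Some j then f j else x.
have gK j : g (lift ord_max j) = f j by rewrite /g liftK.
have g_max : g ord_max = x by rewrite /g unlift_none.
exists g; split=> [i j | y].
- case: (unliftP ord_max i) => [i' ->|->]; case: (unliftP ord_max j) => [j' ->|->];
    rewrite ?gK ?g_max //.
  + by move/f_inj ->.
  + by move=> Ei; case: nPx; apply/f_onto; exists i'.
  + by move=> Ej; case: nPx; apply/f_onto; exists j'.
- split=> [[/f_onto[j <-] | ->] | [i <-]]; first by exists (lift ord_max j).
  + by exists ord_max.
  + case: (unliftP ord_max i) => [j ->|->]; rewrite ?gK ?g_max; last by right.
    by left; apply/f_onto; exists j.
Qed.

Lemma has_card_image_seq (A : eqType) (T : Type) (g : A -> T) (s : seq A) :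
  exists N, has_card (fun x => exists2 a, a \in s & g a = x) N.
Proof.
elim: s => [|a s [N cardN]].
  by exists 0; apply: has_card0 => x [].
have Eas x : (exists2 b, b \in a :: s & g b = x) <->
             (exists2 b, b \in s & g b = x) \/ x = g a.
  split=> [[b] | [[b sb <-] | ->]].
  - by rewrite inE => /orP[/eqP -> <- | sb <-]; [right | left; exists b].
  - by exists b; rewrite // inE sb orbT.
  - by exists a; rewrite ?inE ?eqxx.
have [[b sb Eb] | nsga] := classic (exists2 b, b \in s & g b = g a).
- exists N; apply: has_card_ext cardN => x; rewrite Eas.
  by split=> [|[|->]]; [left | | exists b].
- by exists N.+1; apply: has_card_ext (has_card_add cardN nsga) => x; apply: iff_sym.
Qed.

Fixpoint words (S : finType) (k : nat) : seq (seq S) :=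
  if k is k'.+1 then [::] :: [seq a :: w | a <- enum S, w <- words S k'] else [:: [::]].

Lemma mem_words (S : finType) k (w : seq S) : (w \in words S k) = (size w <= k).
Proof.
elim: k w => [|k IHk] [|a w] //=; rewrite in_cons /=; apply/allpairsP/idP.
- by case=> -[b v] /= [_ vk [_ ->]]; rewrite ltnS -IHk.
- by move=> le_wk; exists (a, w); rewrite mem_enum IHk.
Qed.

Lemma has_card_psi_image (S : finType) (L : language S) n :
  exists N, has_card (psi_image L n) N.
Proof.
have [N cardN] := has_card_image_seq (psi L) (words S n).
exists N; apply: has_card_ext cardN => p.
by split=> [[w wn <-] | [w [le_wn <-]]]; exists w; rewrite ?mem_words // -mem_words.
Qed.

Section PsiAlgorithm.
Variables (S : finType) (L : language S).

Definition psi_state := {p : seq (seq S -> Prop) | exists w, psi L w = p}.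

Definition psi_rep (s : psi_state) : seq S :=
  proj1_sig (constructive_indefinite_description _ (proj2_sig s)).

Lemma psi_repK s : psi L (psi_rep s) = proj1_sig s.
Proof. exact: proj2_sig (constructive_indefinite_description _ (proj2_sig s)). Qed.

Lemma psi_state_inj (s s' : psi_state) : proj1_sig s = proj1_sig s' -> s = s'.
Proof.
by case: s s' => p ps [p' ps'] /= Epp'; subst p'; rewrite (proof_irrelevance _ ps ps').
Qed.

Definition psi_state_of (w : seq S) : psi_state := exist _ (psi L w) (ex_intro _ w erefl).

Definition psi_delta (s : psi_state) (a : sym S) : psi_state :=
  psi_state_of (wnd_step (psi_rep s) a).

Lemma foldl_psi_delta s v u : proj1_sig s = psi L v ->
  proj1_sig (foldl psi_delta s u) = psi L (foldl (@wnd_step S) v u).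
Proof.
elim: u s v => [|a u IHu] s v //= Esv; apply: IHu.
by apply: psi_wnd_step; rewrite psi_repK.
Qed.

Variables (n N : nat) (f : 'I_N -> seq (seq S -> Prop)).
Hypothesis f_onto : forall p, psi_image L n p <-> exists i, f i = p.

(* The states of windows of length at most [n] are numbered below [N];
   the remaining (countably many) states get distinct numbers above. *)
Definition psi_index (s : psi_state) : nat :=
  if excluded_middle_informative (psi_image L n (proj1_sig s)) is left short
  then val (proj1_sig (constructive_indefinite_description _ (proj1 (f_onto _) short)))
  else N + pickle (psi_rep s).

Lemma psi_index_inj : injective psi_index.
Proof.
move=> s s'; rewrite /psi_index.
case: excluded_middle_informative => short; case: excluded_middle_informative => short';
  do ?case: constructive_indefinite_description => /= [i Ei];
  do ?case: constructive_indefinite_description => /= [j Ej].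
- by move=> Eij; apply: psi_state_inj; rewrite -Ei -Ej; congr f; apply: val_inj.
- by move=> Eij; have := ltn_ord i; rewrite Eij ltnNge leq_addr.
- by move=> Eij; have := ltn_ord i; rewrite -Eij ltnNge leq_addr.
- move/addnI/(pcan_inj (@pickleK _)) => Ess'.
  by apply: psi_state_inj; rewrite -!psi_repK Ess'.
Qed.

Definition psi_alg : stream_alg S :=
  @StreamAlg S psi_state (psi_state_of [::]) psi_delta (fun s => L (psi_rep s))
    (fun s => bin (psi_index s)) (fun s s' E => psi_index_inj (bin_inj E)).

Lemma run_psi_alg u : proj1_sig (run psi_alg u) = psi L (wnd u).
Proof. exact: foldl_psi_delta. Qed.

Lemma psi_alg_for : sw_alg_for L psi_alg.
Proof. by move=> w; apply: psi_mem; rewrite psi_repK run_psi_alg. Qed.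

Lemma psi_alg_v_le : v_le psi_alg n (log2 N).
Proof.
move=> u short_u; apply/bigmax_leqP => i _ /=; rewrite size_bin /psi_index.
case: excluded_middle_informative => [short | []]; last first.
  rewrite run_psi_alg; exists (wnd (take i u)); split=> //.
  by apply: short_u; rewrite -ltnS.
by case: constructive_indefinite_description => j _ /=; apply: leq_trunc_log.
Qed.

End PsiAlgorithm.

Lemma size_enc_le_space (S : finType) (A : stream_alg S) u :
  size (st_enc (run A u)) <= space A u.
Proof.
pose enc_size (i : 'I_(size u).+1) := size (st_enc (run A (take i u))).
by have := @leq_bigmax _ enc_size ord_max; rewrite /enc_size /= take_size.
Qed.

Lemma v_le_log2_card (S : finType) (L : language S) n N (A : stream_alg S) m :
  (exists w, L w) -> (exists w, ~ L w) ->
  has_card (psi_image L n) N -> sw_alg_for L A -> v_le A n m -> log2 N <= m.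
Proof.
move=> L_nonempty L_proper [f [f_inj f_onto]] AL Anm.
have word i : {w | size w <= n /\ psi L w = f i}.
  by apply: constructive_indefinite_description; apply/f_onto; exists i.
apply: (@log2_card_le N (fun i => st_enc (run A (map Some (proj1_sig (word i)))))).
- move=> i j /st_enc_inj/(sw_alg_run_equiv AL)/(sw_equiv_psi L_nonempty L_proper).
  by rewrite (proj2 (proj2_sig (word i))) (proj2 (proj2_sig (word j))) => /f_inj.
- move=> i; case: (word i) => w [le_wn _] /=; apply: leq_trans (size_enc_le_space _ _) _.
  apply: Anm => k _; rewrite -map_take wnd_Some size_take.
  by apply: leq_trans le_wn; case: ifP => // /ltnW.
Qed.

Theorem theorem4p1 (Sigma : finType) (L : seq Sigma -> Prop)
  (hne : exists w, L w) (hproper : exists w, ~ L w) :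
  forall n : nat, exists N : nat,
    has_card (psi_image L n) N /\ V_eq L n (log2 N).
Proof.
move=> n; have [N cardN] := has_card_psi_image L n.
exists N; split=> //; split=> [|A m]; last exact: v_le_log2_card.
have [f [_ f_onto]] := cardN.
by exists (psi_alg f_onto); split; [apply: psi_alg_for | apply: psi_alg_v_le].
Qed.
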